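(* Let $p$ be an $m$-dimensional subspace of the real projective space $P^n$ and $p^*$ an $(n-m-1)$-dimensional subspace with $p\cap p^*=\emptyset$, belonging to a normalized domain of the Grassmannian $G(m,n)$ (notation in the context). Let $(p',p^{*\prime})$ be the infinitesimally close $m$-pair, $p'=(A_0+dA_0)\wedge\dots\wedge(A_m+dA_m)$, $p^{*\prime}=(A_{m+1}+dA_{m+1})\wedge\dots\wedge(A_n+dA_n)$, and let $W$ be the cross-ratio of the $m$-pairs $(p,p^* )$ and $(p',p^{*\prime})$. Then the quadratic form $g=\omega_i^\alpha\omega_\alpha^i$ satisfies $$ g=\omega_i^\alpha\omega_\alpha^i=(m+1)\,\mathrm{pr.p.}\Bigl[\log\Bigl(\tfrac{1}{m+1}\,\mathrm{tr}\,W\Bigr)\Bigr]. $$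
   Context: Index ranges: $0\le\xi,\eta,\zeta\le n$; $0\le\alpha,\beta,\gamma\le m$; $m+1\le i,j,k\le n$; summation over repeated indices. A normalized domain: an open domain $U$ of the Grassmannian $G(m,n)$ of $m$-planes of $P^n$, together with a differentiable map $\nu$ assigning to each $p\in U$ an $(n-m-1)$-plane $p^*$ with $p\cap p^*=\emptyset$; the pair $(p,p^* )$ is called an $m$-pair. To each $m$-pair one associates moving point frames $\{A_\xi\}$ with $A_\alpha\in p$, $A_i\in p^*$, $p=A_0\wedge\dots\wedge A_m$, $p^*=A_{m+1}\wedge\dots\wedge A_n$, and $dA_\xi=\omega_\xi^\eta A_\eta$, where the 1-forms satisfy $d\omega_\xi^\eta=\omega_\xi^\zeta\wedge\omega_\zeta^\eta$. The forms $\omega_\alpha^i$ are the basis forms on $U$, and the normalization gives $\omega_i^\alpha=\lambda_{ij}^{\alpha\beta}\omega_\beta^j$. Matrix coordinates of an $m$-plane: the $(n+1)\times(m+1)$ matrix whose columns are coordinates (w.r.t. the frame $\{A_\xi\}$) of $m+1$ points spanning it; tangential matrix coordinates of an $(n-m-1)$-plane: the $(m+1)\times(n+1)$ matrix whose rows are coefficients of $m+1$ independent linear equations defining it. If $X,Y$ are matrix coordinates of $p,p'$ and $U,V$ tangential matrix coordinates of $p^*,p^{*\prime}$, the cross-ratio of the $m$-pairs $(p,p^* )$, $(p',p^{*\prime})$ is $W=X(UX)^{-1}(UY)(VY)^{-1}V$. Here $\mathrm{pr.p.}$ denotes the principal part, i.e. the lowest-order nonvanishing term of the expansion of the expression in the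 entries of the matrix $(\omega_\xi^\eta)$ (second order terms here, higher-order terms discarded). *)

From HB Require Import structures.
From mathcomp Require Import all_boot all_order all_algebra.
From mathcomp Require Import all_classical all_reals all_analysis.
Set Implicit Arguments. Unset Strict Implicit. Unset Printing Implicit Defensive.
Import Order.TTheory GRing.Theory Num.Theory.
Local Open Scope ring_scope.

(* Projective space P^n with n = m + k + 1, homogeneous coordinates indexed by
   'I_(m.+1 + k.+1).  Indices alpha : 'I_m.+1 are embedded by lshift,
   indices i (= m+1 .. n) : 'I_k.+1 by rshift.
   Om : the matrix (omega_xi^eta) evaluated on a tangent vector,
   Om xi eta = omega_xi^eta, so that dA_xi = sum_eta Om xi eta A_eta. *)

Section Defs.
Variables (R : realType) (m k : nat).
Local Notation N := (m.+1 + k.+1)%N.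

Definition idx_a (a : 'I_m.+1) : 'I_N := lshift k.+1 a.
Definition idx_i (i : 'I_k.+1) : 'I_N := rshift m.+1 i.

(* matrix coordinates (w.r.t. the frame {A_xi}) of the points A_alpha + t dA_alpha
   spanning p' (t = 0 gives A_alpha, spanning p) *)
Definition pt_alpha (Om : 'M[R]_N) (t : R) : 'M[R]_(N, m.+1) :=
  \matrix_(r, a) ((idx_a a == r)%:R + t * Om (idx_a a) r).

(* coordinates of the points A_i + t dA_i spanning p-star' (t = 0: A_i, spanning p-star) *)
Definition pt_i (Om : 'M[R]_N) (t : R) : 'M[R]_(N, k.+1) :=
  \matrix_(r, i) ((idx_i i == r)%:R + t * Om (idx_i i) r).

(* tangential matrix coordinates of the (n-m-1)-plane spanned by the columns of Z:
   m+1 independent linear equations (rows) vanishing on it *)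
Definition tangential_coords (V : 'M[R]_(m.+1, N)) (Z : 'M[R]_(N, k.+1)) : Prop :=
  V *m Z = 0 /\ \rank V = m.+1.

Definition cross_ratio (X Y : 'M[R]_(N, m.+1)) (U V : 'M[R]_(m.+1, N)) : 'M[R]_N :=
  X *m invmx (U *m X) *m (U *m Y) *m invmx (V *m Y) *m V.

Definition gform (Om : 'M[R]_N) : R :=
  \sum_(a < m.+1) \sum_(i < k.+1) Om (idx_i i) (idx_a a) * Om (idx_a a) (idx_i i).

Definition normalized (lam : 'I_k.+1 -> 'I_k.+1 -> 'I_m.+1 -> 'I_m.+1 -> R)
  (Om : 'M[R]_N) : Prop :=
  forall (i : 'I_k.+1) (a : 'I_m.+1),
    Om (idx_i i) (idx_a a) =
    \sum_(j < k.+1) \sum_(b < m.+1) lam i j a b * Om (idx_a b) (idx_i j).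

End Defs.

From HB Require Import structures.
From mathcomp Require Import all_boot all_order all_algebra.
From mathcomp Require Import all_classical all_reals all_analysis.
From mathcomp Require Import ring.
Set Implicit Arguments. Unset Strict Implicit. Unset Printing Implicit Defensive.
Import Order.TTheory GRing.Theory Num.Theory.
Import numFieldNormedType.Exports.
Local Open Scope classical_set_scope.
Local Open Scope ring_scope.

(* Split (omega_xi^eta) into the blocks A = (omega_alpha^beta),
   B = (omega_alpha^j), C = (omega_i^beta), D = (omega_i^j).  In the frame
   {A_xi}, p' has matrix coordinates Y = [1 + t A^T; t B^T], and every system
   of tangential coordinates of p*' is a graph V = V1 [1 | - t C^T Q^-1] with
   Q = 1 + t D^T and V1 invertible (for p* this reads U = U1 [1 | 0]).  Hence
   tr W = tr (P N^-1) with P = 1 + t A^T, N = P - t^2 K and K = C^T Q^-1 B^T,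
   i.e. tr W = (m+1) + t^2 h(t) where h(t) = tr (K N^-1) tends to
   tr (C^T B^T) = g.  Writing s = t^2/(m+1), the quantity to study is
   ln (1 + s h) / s, which x/(1+x) <= ln (1+x) <= x squeezes towards g. *)

Section matrix_limits.
Context {R : numFieldType} {T : Type} (F : set_system T) {FF : Filter F}.

Lemma cvg_mxP p q (f : T -> 'M[R]_(p, q)) (M : 'M[R]_(p, q)) :
  f x @[x --> F] --> M <-> forall i j, f x i j @[x --> F] --> M i j.
Proof.
split=> [fM i j | fM].
  exact: (cvg_comp _ _ fM (@coord_continuous R p q i j M)).
move=> A [P nP sPA]; apply: (filterS sPA).
apply: filter_forall => i; apply: filter_forall => j; exact: fM i j _ (nP i j).
Qed.

Lemma cvg_mulmx p q r (f : T -> 'M[R]_(p, q)) (g : T -> 'M[R]_(q, r))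
    (A : 'M[R]_(p, q)) (B : 'M[R]_(q, r)) :
  f x @[x --> F] --> A -> g x @[x --> F] --> B ->
  f x *m g x @[x --> F] --> A *m B.
Proof.
move=> /cvg_mxP fA /cvg_mxP gB; apply/cvg_mxP => i j.
rewrite mxE; under eq_cvg do rewrite mxE.
by apply: (cvg_big add_continuous) => // l _; apply: cvgM.
Qed.

Lemma cvg_mxtrace p (f : T -> 'M[R]_p) (A : 'M[R]_p) :
  f x @[x --> F] --> A -> \tr (f x) @[x --> F] --> \tr A.
Proof. by move=> /cvg_mxP fA; apply: (cvg_big add_continuous) => // i _. Qed.

Lemma cvg_det p (f : T -> 'M[R]_p) (A : 'M[R]_p) :
  f x @[x --> F] --> A -> \det (f x) @[x --> F] --> \det A.
Proof.
move=> /cvg_mxP fA; apply: (cvg_big add_continuous) => // s _.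
by apply: cvgM; [exact: cvg_cst | apply: (cvg_big mul_continuous) => // i _].
Qed.

Lemma cvg_adj p (f : T -> 'M[R]_p) (A : 'M[R]_p) :
  f x @[x --> F] --> A -> \adj (f x) @[x --> F] --> \adj A.
Proof.
move=> /cvg_mxP fA; apply/cvg_mxP => i j.
rewrite mxE; under eq_cvg do rewrite mxE.
apply: cvgM; first exact: cvg_cst.
apply/cvg_det/cvg_mxP => a b; rewrite !mxE; under eq_cvg do rewrite !mxE.
exact: fA.
Qed.

Lemma near_unitmx p (f : T -> 'M[R]_p) (A : 'M[R]_p) :
  A \in unitmx -> f x @[x --> F] --> A -> \forall x \near F, f x \in unitmx.
Proof.
rewrite unitmxE unitfE => detA0 /cvg_det fA.
near=> x; rewrite unitmxE unitfE; apply/eqP => detf0.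
suff : `|\det A - \det (f x)| < `|\det A| by rewrite detf0 subr0 ltxx.
by near: x; apply: cvgr_dist_lt; rewrite ?normr_gt0.
Unshelve. all: by end_near.
Qed.

Lemma cvg_invmx p (f : T -> 'M[R]_p) (A : 'M[R]_p) :
  A \in unitmx -> f x @[x --> F] --> A -> invmx (f x) @[x --> F] --> invmx A.
Proof.
move=> Au fA; rewrite /invmx Au.
apply: (cvg_trans (near_eq_cvg _)).
  by near=> x; rewrite /invmx ifT //; near: x; exact: near_unitmx fA.
apply: cvgZ; last exact: cvg_adj.
by apply: cvgV; [rewrite -unitfE -unitmxE | exact: cvg_det].
Unshelve. all: by end_near.
Qed.

End matrix_limits.

Section ln_limit.
Variable R : realType.

Lemma ge_ln1Dx (x : R) : -1 < x -> x / (1 + x) <= ln (1 + x).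
Proof.
move=> x_gtN1; have x1_gt0 : 0 < 1 + x by rewrite -ltrBlDl sub0r.
have y_gtN1 : -1 < - (x / (1 + x)).
  by rewrite ltrNl opprK ltr_pdivrMr // mul1r ltrDr.
have := le_ln1Dx y_gtN1.
have -> : 1 - x / (1 + x) = (1 + x)^-1 by field; rewrite gt_eqF.
by rewrite lnV ?posrE // lerN2.
Qed.

Lemma cvg_ln1DM_div {T : Type} (F : set_system T) {FF : Filter F}
    (s h : T -> R) (l : R) :
  s x @[x --> F] --> 0 -> (\forall x \near F, 0 < s x) ->
  h x @[x --> F] --> l ->
  ln (1 + s x * h x) / s x @[x --> F] --> l.
Proof.
move=> s0 s_gt0 hl.
have sh0 : s x * h x @[x --> F] --> 0 by rewrite -(mul0r l); apply: cvgM.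
have lower : h x / (1 + s x * h x) @[x --> F] --> l.
  rewrite -[l]divr1 -[X in _ / X]addr0; apply: cvgM => //.
  by apply: cvgV; [rewrite addr0 oner_neq0 | apply: cvgD => //; exact: cvg_cst].
apply: (squeeze_cvgr _ lower hl); near=> x.
have sx_gt0 : 0 < s x by near: x.
have sh_gtN1 : -1 < s x * h x by near: x; apply: cvgr_gt sh0 _ _; rewrite ltrN10.
apply/andP; split.
  have -> : h x / (1 + s x * h x) = (s x * h x / (1 + s x * h x)) / s x.
    by field; rewrite !gt_eqF // -ltrBlDl sub0r.
  by rewrite ler_pM2r ?invr_gt0 ?ge_ln1Dx.
by rewrite ler_pdivrMr // [h x * _]mulrC le_ln1Dx.
Unshelve. all: by end_near.
Qed.

End ln_limit.

Lemma invmxM (R : comUnitRingType) p (A B : 'M[R]_p) :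
  A \in unitmx -> B \in unitmx -> invmx (A *m B) = invmx B *m invmx A.
Proof.
move=> Au Bu; have ABu : A *m B \in unitmx by rewrite unitmx_mul Au.
have ABBA : A *m B *m (invmx B *m invmx A) = 1%:M.
  by rewrite mulmxA -(mulmxA A) mulmxV // mulmx1 mulmxV.
by rewrite -[RHS](mulKmx ABu) ABBA mulmx1.
Qed.

Section cross_ratio_graphs.
Variables (R : realType) (m k : nat).

Lemma tangential_coords_graph (V : 'M[R]_(m.+1, m.+1 + k.+1))
    (Z : 'M[R]_(m.+1, k.+1)) (Q : 'M[R]_k.+1) :
  Q \in unitmx -> tangential_coords V (col_mx Z Q) ->
  lsubmx V \in unitmx /\ V = lsubmx V *m row_mx 1%:M (- (Z *m invmx Q)).
Proof.
move=> Qu [VZQ rankV].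
have VE : V = lsubmx V *m row_mx 1%:M (- (Z *m invmx Q)).
  rewrite mul_mx_row mulmx1 mulmxN mulmxA -[V in LHS]hsubmxK; congr row_mx.
  rewrite -mulNmx; apply: (canRL (mulmxK Qu)); apply/eqP.
  by rewrite -addr_eq0 addrC -mul_row_col hsubmxK VZQ.
split=> //; have := mxrankM_maxl (lsubmx V) (row_mx 1%:M (- (Z *m invmx Q))).
by rewrite -VE rankV -row_free_unit /row_free eqn_leq rank_leq_row => ->.
Qed.

Lemma tr_cross_ratio_graphs (P : 'M[R]_m.+1) (S : 'M[R]_(k.+1, m.+1))
    (U1 V1 : 'M[R]_m.+1) (G0 G : 'M[R]_(m.+1, k.+1)) :
  U1 \in unitmx -> V1 \in unitmx -> P + G *m S \in unitmx ->
  \tr (cross_ratio (col_mx 1%:M 0) (col_mx P S)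
         (U1 *m row_mx 1%:M G0) (V1 *m row_mx 1%:M G)) =
  \tr ((P + G0 *m S) *m invmx (P + G *m S)).
Proof.
move=> U1u V1u Nu.
have graph_col (H : 'M[R]_(m.+1, k.+1)) (X : 'M[R]_m.+1) Y :
  row_mx 1%:M H *m col_mx X Y = X + H *m Y by rewrite mul_row_col mul1mx.
rewrite /cross_ratio -!(mulmxA _ (row_mx _ _)) !graph_col mulmx0 addr0 mulmx1.
rewrite invmxM // -!mulmxA !mulKmx // mxtrace_mulC -!mulmxA.
by rewrite graph_col mulmx0 addr0 mulmx1.
Qed.

End cross_ratio_graphs.

Section frames.
Variables (R : realType) (m k : nat) (Om : 'M[R]_(m.+1 + k.+1)).
Local Notation A := (ulsubmx Om).
Local Notation B := (ursubmx Om).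
Local Notation C := (dlsubmx Om).
Local Notation D := (drsubmx Om).

Lemma pt_alphaE t : pt_alpha Om t = col_mx (1%:M + t *: A^T) (t *: B^T).
Proof.
apply/matrixP => r a; rewrite /pt_alpha /idx_a.
rewrite -(splitK r); case: (fintype.split r) => r' /=.
  by rewrite col_mxEu !mxE eq_lshift eq_sym.
by rewrite col_mxEd !mxE eq_lrshift add0r.
Qed.

Lemma pt_iE t : pt_i Om t = col_mx (t *: C^T) (1%:M + t *: D^T).
Proof.
apply/matrixP => r i; rewrite /pt_i /idx_i.
rewrite -(splitK r); case: (fintype.split r) => r' /=.
  by rewrite col_mxEu !mxE eq_rlshift add0r.
by rewrite col_mxEd !mxE eq_rshift eq_sym.
Qed.

Definition Qmx t : 'M[R]_k.+1 := 1%:M + t *: D^T.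
Definition Kmx t : 'M[R]_m.+1 := C^T *m invmx (Qmx t) *m B^T.
Definition Nmx t : 'M[R]_m.+1 := 1%:M + t *: A^T - t ^+ 2 *: Kmx t.

Lemma tr_cross_ratio_frames t U V :
  tangential_coords U (pt_i Om 0) -> tangential_coords V (pt_i Om t) ->
  Qmx t \in unitmx -> Nmx t \in unitmx ->
  \tr (cross_ratio (pt_alpha Om 0) (pt_alpha Om t) U V) =
  m.+1%:R + t ^+ 2 * \tr (Kmx t *m invmx (Nmx t)).
Proof.
rewrite !pt_iE => HU HV Qu Nu.
have [U1u ->] : lsubmx U \in unitmx /\ U = lsubmx U *m row_mx 1%:M 0.
  have Q0u : 1%:M + 0 *: D^T \in unitmx by rewrite scale0r addr0 unitmx1.
  by have := tangential_coords_graph Q0u HU; rewrite !scale0r mul0mx oppr0.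
have [V1u ->] := tangential_coords_graph Qu HV.
have NE : 1%:M + t *: A^T + - (t *: C^T *m invmx (Qmx t)) *m (t *: B^T) = Nmx t.
  by rewrite /Nmx /Kmx mulNmx -scalemxAr -!scalemxAl scalerA -expr2.
rewrite !pt_alphaE !scale0r addr0 tr_cross_ratio_graphs ?NE //.
rewrite mul0mx addr0 -[X in X *m _](subrK (t ^+ 2 *: Kmx t) (1%:M + _)) -/(Nmx t).
by rewrite mulmxDl mulmxV // mxtraceD mxtrace1 -scalemxAl mxtraceZ.
Qed.

Lemma gformE : gform Om = \tr (C^T *m B^T).
Proof.
rewrite /gform /mxtrace; apply: eq_bigr => a _; rewrite mxE.
by apply: eq_bigr => i _; rewrite !mxE.
Qed.

Lemma cvg_Qmx : Qmx t @[t --> 0] --> (1%:M : 'M[R]_k.+1).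
Proof.
rewrite -[X in _ --> X]addr0 -(scale0r D^T).
by apply: cvgD; [exact: cvg_cst | apply: cvgZ => //; exact: cvg_cst].
Qed.

Lemma cvg_Kmx : Kmx t @[t --> 0] --> C^T *m B^T.
Proof.
have -> : C^T *m B^T = C^T *m invmx 1%:M *m B^T by rewrite invmx1 mulmx1.
apply: cvg_mulmx; last exact: cvg_cst.
apply: cvg_mulmx; first exact: cvg_cst.
exact: cvg_invmx (unitmx1 _ _) cvg_Qmx.
Qed.

Lemma cvg_Nmx : Nmx t @[t --> 0] --> (1%:M : 'M[R]_m.+1).
Proof.
have -> : (1%:M : 'M[R]_m.+1) = 1%:M + 0 *: A^T - 0 ^+ 2 *: (C^T *m B^T).
  by rewrite !scale0r expr0n scale0r addr0 subr0.
apply: cvgB; last by apply: cvgZ; [exact: exprn_continuous | exact: cvg_Kmx].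
by apply: cvgD; [exact: cvg_cst | apply: cvgZ => //; exact: cvg_cst].
Qed.

Lemma cvg_tr_Kmx_Nmx : \tr (Kmx t *m invmx (Nmx t)) @[t --> 0] --> gform Om.
Proof.
rewrite gformE -[X in \tr X](mulmx1 (C^T *m B^T)) -invmx1.
apply: cvg_mxtrace; apply: cvg_mulmx; first exact: cvg_Kmx.
exact: cvg_invmx (unitmx1 _ _) cvg_Nmx.
Qed.

End frames.

Theorem theorem1 (R : realType) (m k : nat)
  (lam : 'I_k.+1 -> 'I_k.+1 -> 'I_m.+1 -> 'I_m.+1 -> R)
  (Om : 'M[R]_(m.+1 + k.+1)) (HOm : normalized lam Om)
  (U : 'M[R]_(m.+1, m.+1 + k.+1)) (V : R -> 'M[R]_(m.+1, m.+1 + k.+1))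
  (HU : tangential_coords U (pt_i Om 0))
  (HV : \forall t \near dnbhs (0:R), tangential_coords (V t) (pt_i Om t)) :
  (fun t : R =>
     (m.+1)%:R *
       ln (\tr (cross_ratio (pt_alpha Om 0) (pt_alpha Om t) U (V t)) / (m.+1)%:R)
     / t ^+ 2)
    @ dnbhs (0:R) --> gform Om.
Proof.
have m1_gt0 : 0 < m.+1%:R :> R by rewrite ltr0n.
pose s t : R := t ^+ 2 / m.+1%:R.
have s0 : s t @[t --> (0 : R)^'] --> 0.
  suff : s t @[t --> 0] --> s 0.
    by rewrite /s expr0n mul0r; exact: cvg_within_filter.
  by apply: cvgM; [exact: exprn_continuous | exact: cvg_cst].
have t_neq0 : \forall t \near (0 : R)^', t != 0 by exact: nbhs_dnbhs_neq.
have s_gt0 : \forall t \near (0 : R)^', 0 < s t.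
  by near=> t; rewrite divr_gt0 // exprn_even_gt0 //; near: t.
have Qu : \forall t \near (0 : R)^', Qmx Om t \in unitmx.
  by apply: nbhs_dnbhs; exact: near_unitmx (unitmx1 _ _) (cvg_Qmx Om).
have Nu : \forall t \near (0 : R)^', Nmx Om t \in unitmx.
  by apply: nbhs_dnbhs; exact: near_unitmx (unitmx1 _ _) (cvg_Nmx Om).
have h_lim : \tr (Kmx Om t *m invmx (Nmx Om t)) @[t --> (0 : R)^'] --> gform Om.
  by apply: cvg_within_filter; exact: cvg_tr_Kmx_Nmx.
apply: cvg_trans (cvg_ln1DM_div s0 s_gt0 h_lim); apply: near_eq_cvg.
near=> t; rewrite (tr_cross_ratio_frames HU); try by near: t.
have t0 : t != 0 by near: t.
rewrite /s; set h := \tr (Kmx Om t *m invmx (Nmx Om t)).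
have -> : (m.+1%:R + t ^+ 2 * h) / m.+1%:R = 1 + t ^+ 2 / m.+1%:R * h.
  by field; rewrite nat1r gt_eqF.
by field; rewrite t0 nat1r gt_eqF.
Unshelve. all: by end_near.
Qed.
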